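(* Let $u\in U$, $w'\in W$, and let $y_1,\dots,y_N\in F$ and $\pi_1,\dots,\pi_{N+1}\in W$ be produced by the decomposition procedure below. Define $\sigma_{N+1}=w'$ and, for $k=N,\dots,1$, $\sigma_k=\sigma_{k+1}$ if step $k$ is of type A and $\sigma_k=s_{i_k}\sigma_{k+1}$ if step $k$ is of type B; equivalently \[ \sigma_k=\Big[\prod_{j=k}^{N}\begin{cases}1&\text{if step }j\text{ is of type A}\\ s_{i_j}&\text{if step }j\text{ is of type B}\end{cases}\Big]w' . \] Then for every $k=1,\dots,N+1$, as elements of $W$, \[ \pi_k=s_{i_N}s_{i_{N-1}}\cdots s_{i_k}\,\sigma_k , \] and in particular $\pi_1=w_0\sigma_1$.
   Context: Let $F$ be a non-archimedean local field with ring of integers $\mathcal{O}$, maximal ideal $\mathfrak{p}$, unit group $\mathcal{O}^\times$, residue field $\mathbb{F}_q$. Let $G$ be a split connected reductive group over $F$ with split maximal torus $T$, irreducible root system $\Phi$, positive roots $\Phi^+$, $\Phi^-=-\Phi^+$, simple roots $\alpha_i$, coroots $\alpha^\vee$, Weyl group $W$ with simple reflections $s_i$ acting on $\Phi$. Let $n\ge1$ with $q\equiv1\pmod{2n}$ and $\widetilde G$ an $n$-fold metaplectic cover of $G(F)$ (central extension by $\mu_n$); $\widetilde H$ = preimage of $H$. The cover splits over $K=G(\mathcal{O})$ and unipotent subgroups. Steinberg generators $e_\alpha(x)$, $w_\alpha(x)=e_\alpha(x)e_{-\alpha}(-x^{-1})$, $h_\alpha(x)=w_\alpha(x)w_\alpha(-1)\in\widetilde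 T$, with $h_\alpha(x)e_\beta(y)h_\alpha(x)^{-1}=e_\beta(x^{\langle\beta,\alpha^\vee\rangle}y)$. $U^+$ (resp. $U=U^-$) is generated by $e_\alpha(x)$ (resp. $e_{-\alpha}(x)$), $\alpha\in\Phi^+$, $x\in F$. $J$ = preimage of $B^-(\mathbb{F}_q)$ under $G(\mathcal{O})\to G(\mathbb{F}_q)$. Weyl elements are identified with fixed representatives in $K$ ($s_i\leftrightarrow w_{\alpha_i}(-1)$; $s_\alpha=vs_iv^{-1}$ if $\alpha=v(\alpha_i)\in\Phi^+$). Fix a reduced word $w_0=s_{i_1}\cdots s_{i_N}$ of the longest element, $\gamma_j=s_{i_N}\cdots s_{i_{j+1}}(\alpha_{i_j})$, so $\Phi^+=\{\gamma_1,\dots,\gamma_N\}$. For $0\le k\le N$, $G_k$ = set of products $\big(\prod_{j=1}^{k-1}e_{-\gamma_j}(t_j)\big)\big(\prod_{j=k+1}^N e_{\gamma_j}(t_j)\big)$, $t_j\in F$. Fact: for $z\in F$, $g\in G_k$ there is a unique $g'\in G_k$ with $e_{-\gamma_k}(z)g=g'e_{-\gamma_k}(z)$. Decomposition procedure. Write $u=e_{-\gamma_1}(x_1)\cdots e_{-\gamma_N}(x_N)$ ($x_j\in F$ unique). Put $p_{N+1}=h_{N+1}=j_{N+1}=1$, $\pi_{N+1}=w'$, $t_N=0$. For $k=N,N-1,\dots,1$: the element $p_{k+1}$ has the form $e_{-\gamma_k}(t_k)p'_k$ with $t_k\in F$, $p'_k\in G_k$ uniquely determined; let $p''_k\in G_k$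 satisfy $e_{-\gamma_k}(x_k+t_k)p'_k=p''_ke_{-\gamma_k}(x_k+t_k)$; define $y_k\in F$ by $h_{k+1}^{-1}e_{-\gamma_k}(x_k+t_k)h_{k+1}=e_{-\gamma_k}(y_k)$. Step $k$ is of type A if $y_k\notin\mathcal{O}$, or $y_k\in\mathcal{O}^\times$ and $\pi_{k+1}^{-1}(\gamma_k)\in\Phi^-$; otherwise ($y_k\in\mathfrak{p}$, or $y_k\in\mathcal{O}^\times$ and $\pi_{k+1}^{-1}(\gamma_k)\in\Phi^+$) of type B. Type A: $h_k=h_{k+1}h_{\gamma_k}(y_k^{-1})$, $\pi_k=s_{\gamma_k}\pi_{k+1}$, $j_k=e_{\pi_{k+1}^{-1}(\gamma_k)}(y_k^{-1})j_{k+1}$, $p_k=p''_k\,h_ke_{\gamma_k}(y_k)h_k^{-1}$. Type B: $h_k=h_{k+1}$, $\pi_k=\pi_{k+1}$, $j_k=e_{-\pi_{k+1}^{-1}(\gamma_k)}(y_k)j_{k+1}$, $p_k=p''_k$. *)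

From mathcomp Require Import all_boot all_order all_algebra.
Set Implicit Arguments. Unset Strict Implicit. Unset Printing Implicit Defensive.
Import Order.TTheory GRing.Theory Num.Theory.
Local Open Scope ring_scope.

Section RootData.
Variables (R : realFieldType) (n r : nat).

Definition dotv (u v : 'cV[R]_n) : R := (u^T *m v) 0 0.

(* The reflection s_a : x |-> x - (2 (x,a)/(a,a)) a, as a matrix acting on
   column vectors on the left, so that group product = matrix product. *)
Definition refl (a : 'cV[R]_n) : 'M[R]_n :=
  1%:M - (2 / dotv a a) *: (a *m a^T).

Definition root_system (Phi : seq 'cV[R]_n) : Prop :=
  [/\ 0 \notin Phi,
      (forall a b, a \in Phi -> b \in Phi -> refl a *m b \in Phi),
      (forall a b, a \in Phi -> b \in Phi ->
         exists z : int, 2 * dotv b a / dotv a a = z%:~R) &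
      (forall a (c : R), a \in Phi -> c *: a \in Phi -> c = 1 \/ c = -1)].

Definition irreducible_rs (Phi : seq 'cV[R]_n) : Prop :=
  Phi <> [::] /\
  forall P : pred 'cV[R]_n,
    (forall a b, a \in Phi -> b \in Phi -> P a -> ~~ P b -> dotv a b = 0) ->
    all P Phi \/ all (predC P) Phi.

Definition is_base (Phi : seq 'cV[R]_n) (alpha : 'I_r -> 'cV[R]_n) : Prop :=
  [/\ (forall i, alpha i \in Phi),
      (forall c : 'I_r -> R, \sum_i c i *: alpha i = 0 -> forall i, c i = 0) &
      (forall b, b \in Phi -> exists c : 'I_r -> int,
          b = \sum_i (c i)%:~R *: alpha i /\
          ((forall i, 0 <= c i) \/ (forall i, c i <= 0)))].

Definition posroot (Phi : seq 'cV[R]_n) (alpha : 'I_r -> 'cV[R]_n)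
  (b : 'cV[R]_n) : Prop :=
  b \in Phi /\ exists c : 'I_r -> int,
    (forall i, 0 <= c i) /\ b = \sum_i (c i)%:~R *: alpha i.
Definition negroot Phi alpha (b : 'cV[R]_n) : Prop := posroot Phi alpha (- b).

Definition wordprod (alpha : 'I_r -> 'cV[R]_n) (s : seq 'I_r) : 'M[R]_n :=
  foldr (fun i M => refl (alpha i) *m M) 1%:M s.

Definition inW (alpha : 'I_r -> 'cV[R]_n) (w : 'M[R]_n) : Prop :=
  exists s : seq 'I_r, w = wordprod alpha s.

Definition w0_of (alpha : 'I_r -> 'cV[R]_n) (N : nat) (i : nat -> 'I_r) :=
  wordprod alpha [seq i j | j <- iota 1 N].

(* i_1 ... i_N is a reduced word for the longest element of W:
   it is reduced (no shorter word gives the same element) and every element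
   of W has length <= N (so w0 has maximal length). *)
Definition longest_reduced_word (alpha : 'I_r -> 'cV[R]_n) (N : nat)
  (i : nat -> 'I_r) : Prop :=
  (forall s, wordprod alpha s = w0_of alpha N i -> (N <= size s)%N) /\
  (forall w, inW alpha w -> exists s, (size s <= N)%N /\ w = wordprod alpha s).

(* s_{i_N} s_{i_{N-1}} ... s_{i_k}  (empty product = 1 when k = N+1). *)
Definition tailprod (alpha : 'I_r -> 'cV[R]_n) (N : nat) (i : nat -> 'I_r)
  (k : nat) : 'M[R]_n :=
  wordprod alpha [seq i j | j <- rev (iota k (N.+1 - k))].

Definition gamma (alpha : 'I_r -> 'cV[R]_n) (N : nat) (i : nat -> 'I_r)
  (k : nat) : 'cV[R]_n :=
  tailprod alpha N i k.+1 *m alpha (i k).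

End RootData.

(* Valuative class of the element y_k of F computed at step k of the
   decomposition procedure:  Yout : y_k \notin O ;  Yunit : y_k \in O^x ;
   Yp : y_k \in p. *)
Inductive ycls := Yout | Yunit | Yp.

Section Procedure.
Variables (R : realFieldType) (n r : nat).
Variables (Phi : seq 'cV[R]_n) (alpha : 'I_r -> 'cV[R]_n) (N : nat)
          (i : nat -> 'I_r) (c : nat -> ycls) (pi sigma : nat -> 'M[R]_n).

Definition typeA (k : nat) : Prop :=
  c k = Yout \/
  (c k = Yunit /\ negroot Phi alpha (invmx (pi k.+1) *m gamma alpha N i k)).
Definition typeB (k : nat) : Prop :=
  c k = Yp \/
  (c k = Yunit /\ posroot Phi alpha (invmx (pi k.+1) *m gamma alpha N i k)).

(* The Weyl-group part of step k of the procedure, together with the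
   definition of sigma_k. *)
Definition step_rel (k : nat) : Prop :=
  (typeA k -> pi k = refl (gamma alpha N i k) *m pi k.+1 /\
              sigma k = sigma k.+1) /\
  (typeB k -> pi k = pi k.+1 /\
              sigma k = refl (alpha (i k)) *m sigma k.+1).
End Procedure.

From mathcomp Require Import all_boot all_order all_algebra.
From mathcomp Require Import zify.
Set Implicit Arguments. Unset Strict Implicit. Unset Printing Implicit Defensive.
Import Order.TTheory GRing.Theory Num.Theory.
Local Open Scope ring_scope.

(* With T = s_(i_N) ... s_(i_(k+1)) orthogonal and gamma_k = T alpha_(i_k),
   s_(gamma_k) T = T s_(i_k), so a type A step turns pi_(k+1) = T sigma_(k+1)
   into T s_(i_k) sigma_k, while a type B step is absorbed by s_(i_k)^2 = 1;
   the invariant pi_k = s_(i_N) ... s_(i_k) sigma_k thus propagates from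
   k = N+1 down to k = 1.  Every step has one of the two types because
   pi_(k+1) stays in W, so pi_(k+1)^-1 gamma_k is a root, hence positive or
   negative.  Finally s_(i_N) ... s_(i_1) = w0^-1 = w0: the longest element
   sends every simple root to a negative root, so w0^2 sends them all to
   positive roots, and by the exchange condition such an element of W is 1. *)

Section Reflections.
Variables (R : realFieldType) (n : nat).
Implicit Types (a b : 'cV[R]_n) (T : 'M[R]_n).

Lemma trmx_mul_dotv a b : a^T *m b = (dotv a b)%:M.
Proof. by rewrite [LHS]mx11_scalar. Qed.

Lemma dotv_self_neq0 a : a != 0 -> dotv a a != 0.
Proof.
apply: contraNneq; rewrite /dotv mxE => /eqP; rewrite psumr_eq0; last first.
  by move=> j _; rewrite mxE -expr2 sqr_ge0.
move=> /allP a0; apply/eqP/matrixP => j k; rewrite ord1 !mxE.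
by have := a0 j (mem_index_enum j); rewrite mxE -expr2 sqrf_eq0 => /eqP.
Qed.

Lemma refl_mulmx a b : refl a *m b = b - (2 * dotv a b / dotv a a) *: a.
Proof.
rewrite /refl mulmxBl mul1mx -scalemxAl -mulmxA trmx_mul_dotv mul_mx_scalar.
by rewrite scalerA mulrAC.
Qed.

Lemma refl_mulmx_self a : a != 0 -> refl a *m a = - a.
Proof.
move=> /dotv_self_neq0 a0; rewrite refl_mulmx mulfK // scaler_nat mulr2n.
by rewrite opprD addrA subrr add0r.
Qed.

Lemma trmx_refl a : (refl a)^T = refl a.
Proof. by rewrite /refl linearB /= trmx1 linearZ /= trmx_mul trmxK. Qed.

Lemma refl_invol a : a != 0 -> refl a *m refl a = 1%:M.
Proof.
move=> /dotv_self_neq0 a0; set k := 2 / dotv a a.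
have aaT2 : a *m a^T *m (a *m a^T) = dotv a a *: (a *m a^T).
  by rewrite mulmxA -(mulmxA a) trmx_mul_dotv mul_mx_scalar scalemxAl.
rewrite /refl mulmxBl mul1mx mulmxBr mulmx1 -scalemxAl -scalemxAr aaT2.
rewrite !scalerA -/k.
have -> : k * k * dotv a a = k + k.
  by rewrite /k -mulrA mulfVK // mulr_natr mulr2n.
by rewrite scalerDl opprB addrK subrK.
Qed.

Lemma dotv_orthogonal T a b :
  T^T *m T = 1%:M -> dotv (T *m a) (T *m b) = dotv a b.
Proof. by move=> TT; rewrite /dotv trmx_mul -mulmxA (mulmxA T^T) TT mul1mx. Qed.

Lemma refl_conj T a : T^T *m T = 1%:M -> refl (T *m a) = T *m refl a *m T^T.
Proof.
move=> TT; rewrite /refl dotv_orthogonal // mulmxBr mulmx1 mulmxBl (mulmx1C TT).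
by rewrite -scalemxAr -scalemxAl trmx_mul !mulmxA.
Qed.

End Reflections.

Section Words.
Variables (R : realFieldType) (n r : nat) (alpha : 'I_r -> 'cV[R]_n).
Hypothesis alpha_neq0 : forall j, alpha j != 0.

Lemma wordprod_cons j s :
  wordprod alpha (j :: s) = refl (alpha j) *m wordprod alpha s.
Proof. by []. Qed.

Lemma wordprod_cat s t :
  wordprod alpha (s ++ t) = wordprod alpha s *m wordprod alpha t.
Proof.
elim: s => [|j s IH]; first by rewrite mul1mx.
by rewrite cat_cons !wordprod_cons IH mulmxA.
Qed.

Lemma wordprod_rcons s j :
  wordprod alpha (rcons s j) = wordprod alpha s *m refl (alpha j).
Proof. by rewrite -cats1 wordprod_cat /wordprod /= mulmx1. Qed.

Lemma trmx_wordprod s : (wordprod alpha s)^T = wordprod alpha (rev s).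
Proof.
elim: s => [|j s IH]; first by rewrite /wordprod /= trmx1.
by rewrite rev_cons wordprod_rcons -IH -trmx_refl -trmx_mul.
Qed.

Lemma wordprod_orthogonal s : (wordprod alpha s)^T *m wordprod alpha s = 1%:M.
Proof.
elim: s => [|j s IH]; first by rewrite /wordprod /= trmx1 mulmx1.
rewrite wordprod_cons trmx_mul trmx_refl mulmxA -(mulmxA (wordprod alpha s)^T).
by rewrite refl_invol // mulmx1 IH.
Qed.

Lemma invmx_wordprod s : invmx (wordprod alpha s) = wordprod alpha (rev s).
Proof.
have inv_l := wordprod_orthogonal s; rewrite trmx_wordprod in inv_l.
have [unit_s _] := mulmx1_unit (mulmx1C inv_l).
by rewrite -[RHS]mulmx1 -(mulmxV unit_s) mulmxA inv_l mul1mx.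
Qed.

Lemma inW_mul w v : inW alpha w -> inW alpha v -> inW alpha (w *m v).
Proof. by move=> [s ->] [t ->]; exists (s ++ t); rewrite wordprod_cat. Qed.

Lemma inW_refl_simple j : inW alpha (refl (alpha j)).
Proof. by exists [:: j]; rewrite wordprod_cons mulmx1. Qed.

Lemma inW_invmx w : inW alpha w -> inW alpha (invmx w).
Proof. by move=> [s ->]; exists (rev s); rewrite invmx_wordprod. Qed.

End Words.

Section Roots.
Variables (R : realFieldType) (n r : nat).
Variables (Phi : seq 'cV[R]_n) (alpha : 'I_r -> 'cV[R]_n).
Hypotheses (RS : root_system Phi) (BS : is_base Phi alpha).

Lemma root_neq0 b : b \in Phi -> b != 0.
Proof. by case: RS => Phi0 _ _ _ bP; apply: contraNneq Phi0 => <-. Qed.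

Lemma simple_root_in j : alpha j \in Phi.
Proof. by case: BS. Qed.

Lemma simple_root_neq0 j : alpha j != 0.
Proof. exact: root_neq0 (simple_root_in j). Qed.

Lemma refl_root_in a b : a \in Phi -> b \in Phi -> refl a *m b \in Phi.
Proof. by case: RS => _ stable _ _; apply: stable. Qed.

Lemma oppr_root_in b : b \in Phi -> - b \in Phi.
Proof. by move=> bP; rewrite -refl_mulmx_self ?root_neq0 // refl_root_in. Qed.

Lemma inW_root_in w b : inW alpha w -> b \in Phi -> w *m b \in Phi.
Proof.
move=> [s ->]; elim: s b => [|j s IH] b bP; first by rewrite mul1mx.
by rewrite wordprod_cons -mulmxA refl_root_in ?simple_root_in ?IH.
Qed.

Lemma simple_coord_inj (c d : 'I_r -> R) :
  \sum_k c k *: alpha k = \sum_k d k *: alpha k -> forall k, c k = d k.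
Proof.
case: BS => _ free _ cd k; apply/eqP; rewrite -subr_eq0; apply/eqP.
apply: (free (fun k => c k - d k)).
by under eq_bigr do rewrite scalerBl; rewrite sumrB cd subrr.
Qed.

Definition poscone (v : 'cV[R]_n) :=
  exists c : 'I_r -> R, (forall k, 0 <= c k) /\ v = \sum_k c k *: alpha k.

Lemma poscone0 : poscone 0.
Proof.
by exists (fun=> 0); split=> //; rewrite big1 // => k _; rewrite scale0r.
Qed.

Lemma posconeD v w : poscone v -> poscone w -> poscone (v + w).
Proof.
move=> [c [c0 ->]] [d [d0 ->]]; exists (fun k => c k + d k).
split=> [k|]; first by rewrite addr_ge0.
by rewrite -big_split; apply: eq_bigr => k _; rewrite scalerDl.
Qed.

Lemma posconeZ t v : 0 <= t -> poscone v -> poscone (t *: v).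
Proof.
move=> t0 [c [c0 ->]]; exists (fun k => t * c k).
split=> [k|]; first by rewrite mulr_ge0.
by rewrite scaler_sumr; apply: eq_bigr => k _; rewrite scalerA.
Qed.

Lemma poscone_antisym v : poscone v -> poscone (- v) -> v = 0.
Proof.
move=> [c [c0 Ec]] [d [d0 Ed]].
have cd0 : \sum_k (c k + d k) *: alpha k = \sum_k (0 : R) *: alpha k.
  under eq_bigr do rewrite scalerDl.
  by rewrite big_split /= -Ec -Ed subrr big1 // => k _; rewrite scale0r.
have c_eq0 k : c k = 0.
  by have /eqP := simple_coord_inj cd0 k; rewrite paddr_eq0 // => /andP[/eqP].
by rewrite Ec big1 // => k _; rewrite c_eq0 scale0r.
Qed.

Lemma posroot_poscone b : posroot Phi alpha b -> poscone b.
Proof.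
case=> _ [c [c0 ->]]; exists (fun k => (c k)%:~R).
by split=> // k; rewrite ler0z.
Qed.

Lemma root_pos_or_neg b : b \in Phi -> posroot Phi alpha b \/ negroot Phi alpha b.
Proof.
move=> bP; case: BS => _ _ /(_ b bP) [c [Ec [c0|c0]]].
  by left; split; last exists c.
right; split; first exact: oppr_root_in.
exists (fun k => - c k); split=> [k|]; first by rewrite oppr_ge0.
by rewrite Ec -sumrN; apply: eq_bigr => k _; rewrite -scaleNr mulrNz.
Qed.

Lemma root_pos_neg_false b :
  b \in Phi -> posroot Phi alpha b -> negroot Phi alpha b -> False.
Proof.
move=> bP /posroot_poscone pos /posroot_poscone neg.
by move: (root_neq0 bP); rewrite (poscone_antisym pos neg) eqxx.
Qed.

Lemma simple_root_pos j : posroot Phi alpha (alpha j).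
Proof.
split; first exact: simple_root_in.
exists (fun k => (k == j)%:R); split=> [k|]; first by case: (k == j).
rewrite (bigD1 j) //= eqxx scale1r big1 ?addr0 // => k /negPf ->.
by rewrite scale0r.
Qed.

(* s_j b = b - t alpha_j; were it negative, b would be a nonnegative multiple
   of alpha_j, hence alpha_j itself by reducedness. *)
Lemma refl_simple_posroot j b : posroot Phi alpha b -> b != alpha j ->
  posroot Phi alpha (refl (alpha j) *m b).
Proof.
move=> bpos bne; have bP : b \in Phi by case: bpos.
have sbP := refl_root_in (simple_root_in j) bP.
case: (root_pos_or_neg sbP) => // /posroot_poscone [d [d0 Ed]].
have [_ [c [c0 Ec]]] := bpos.
set t := 2 * dotv (alpha j) b / dotv (alpha j) (alpha j).
have cd : \sum_k ((c k)%:~R + d k) *: alpha k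
          = \sum_k ((k == j)%:R * t) *: alpha k.
  under eq_bigr do rewrite scalerDl.
  rewrite big_split /= -Ec -Ed refl_mulmx opprB addrC subrK.
  rewrite (bigD1 j) //= eqxx mul1r big1 ?addr0 // => k /negPf ->.
  by rewrite mul0r scale0r.
have c_eq0 k : k != j -> c k = 0.
  move=> kj; have := simple_coord_inj cd k; rewrite (negPf kj) mul0r => /eqP.
  by rewrite paddr_eq0 ?ler0z // intr_eq0 => /andP[/eqP].
have Eb : b = (c j)%:~R *: alpha j.
  by rewrite Ec (bigD1 j) //= big1 ?addr0 // => k /c_eq0 ->; rewrite scale0r.
case: RS => _ _ _ /(_ (alpha j) (c j)%:~R (simple_root_in j)).
rewrite -Eb => /(_ bP) [] cj.
  by move: bne; rewrite Eb cj scale1r eqxx.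
by have := c0 j; rewrite -(ler0z R) cj oppr_ge0 ler10.
Qed.

Lemma exchange_condition s j :
  negroot Phi alpha (wordprod alpha s *m alpha j) ->
  exists2 s', (size s' < size s)%N &
    wordprod alpha s *m refl (alpha j) = wordprod alpha s'.
Proof.
have orth := wordprod_orthogonal simple_root_neq0.
elim: s => [|k s IH].
  rewrite mul1mx => neg.
  by case: (root_pos_neg_false (simple_root_in j) (simple_root_pos j) neg).
rewrite wordprod_cons -mulmxA => neg.
have bP : wordprod alpha s *m alpha j \in Phi.
  by rewrite inW_root_in ?simple_root_in //; exists s.
case: (root_pos_or_neg bP) => [bpos|bneg]; last first.
  have [s' lt_s' ws'] := IH bneg.
  by exists (k :: s') => //; rewrite wordprod_cons -mulmxA ws'.
have sj_eq : wordprod alpha s *m alpha j = alpha k.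
  apply/eqP; apply: contraT => bne.
  case: (root_pos_neg_false _ (refl_simple_posroot bpos bne) neg).
  by rewrite refl_root_in ?simple_root_in.
exists s => //; rewrite -sj_eq refl_conj // -!mulmxA (mulmxA _^T) orth mul1mx.
by rewrite refl_invol ?simple_root_neq0 // mulmx1.
Qed.

Lemma negroot_mulmx_posroot w b :
  inW alpha w -> (forall j, negroot Phi alpha (w *m alpha j)) ->
  posroot Phi alpha b -> negroot Phi alpha (w *m b).
Proof.
move=> wW neg bpos; have bP : b \in Phi by case: bpos.
have wbP := inW_root_in wW bP.
case: (root_pos_or_neg wbP) => // /posroot_poscone wb_pos; exfalso.
have [_ [c [c0 Ec]]] := bpos.
suff : poscone (- (w *m b)).
  by move/(poscone_antisym wb_pos)/eqP; rewrite (negPf (root_neq0 wbP)).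
rewrite Ec mulmx_sumr -sumrN; apply: (big_ind poscone) => //.
- exact: poscone0.
- exact: posconeD.
move=> k _; rewrite -scalemxAr -scalerN; apply: posconeZ; first by rewrite ler0z.
exact: posroot_poscone (neg k).
Qed.

Lemma wordprod_pos_eq1 s :
  (forall j, posroot Phi alpha (wordprod alpha s *m alpha j)) ->
  wordprod alpha s = 1%:M.
Proof.
elim: {s}(size s) {-2}s (leqnn (size s)) => [|m IH] s.
  by rewrite leqn0 => /nilP ->.
case/lastP: s => [|s j] // size_s pos.
have neg : negroot Phi alpha (wordprod alpha s *m alpha j).
  move: (pos j); rewrite wordprod_rcons -mulmxA.
  by rewrite refl_mulmx_self ?simple_root_neq0 // mulmxN.
have [s' lt_s' ws'] := exchange_condition neg.
rewrite wordprod_rcons ws'; apply: IH => [|k].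
  by move: size_s; rewrite size_rcons; lia.
by rewrite -ws' -wordprod_rcons.
Qed.

Section LongestElement.
Variables (N : nat) (i : nat -> 'I_r).
Hypothesis longest : longest_reduced_word alpha N i.

Lemma inW_w0 : inW alpha (w0_of alpha N i).
Proof. by exists [seq i j | j <- iota 1 N]. Qed.

(* Were w0 alpha_j positive, w0 s_j (of length <= N) would send alpha_j to a
   negative root, and the exchange condition would shorten (w0 s_j) s_j = w0. *)
Lemma w0_simple_negroot j : negroot Phi alpha (w0_of alpha N i *m alpha j).
Proof.
have [reduced maximal] := longest.
have bP := inW_root_in inW_w0 (simple_root_in j).
case: (root_pos_or_neg bP) => // bpos; exfalso.
have [s [size_s ws]] := maximal _ (inW_mul inW_w0 (inW_refl_simple _ j)).
have neg : negroot Phi alpha (wordprod alpha s *m alpha j).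
  rewrite -ws -mulmxA refl_mulmx_self ?simple_root_neq0 //.
  by rewrite /negroot mulmxN opprK.
have [s' lt_s' ws'] := exchange_condition neg.
rewrite -ws -mulmxA refl_invol ?simple_root_neq0 // mulmx1 in ws'.
by have := reduced s' (esym ws'); rewrite leqNgt (leq_trans lt_s' size_s).
Qed.

Lemma w0_invol : w0_of alpha N i *m w0_of alpha N i = 1%:M.
Proof.
rewrite -wordprod_cat; apply: wordprod_pos_eq1 => j.
rewrite wordprod_cat -mulmxA.
move: (negroot_mulmx_posroot inW_w0 w0_simple_negroot (w0_simple_negroot j)).
by rewrite /negroot mulmxN opprK.
Qed.

End LongestElement.
End Roots.

Section TailProducts.
Variables (R : realFieldType) (n r : nat) (alpha : 'I_r -> 'cV[R]_n).
Variables (N : nat) (i : nat -> 'I_r).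

Lemma tailprodSN : tailprod alpha N i N.+1 = 1%:M.
Proof. by rewrite /tailprod subnn. Qed.

Lemma tailprodE k : (k <= N)%N ->
  tailprod alpha N i k = tailprod alpha N i k.+1 *m refl (alpha (i k)).
Proof.
by move=> kN; rewrite /tailprod subSS subSn //= rev_cons map_rcons wordprod_rcons.
Qed.

Lemma inW_tailprod k : inW alpha (tailprod alpha N i k).
Proof. by eexists. Qed.

Lemma refl_gamma_tailprod k : (forall j, alpha j != 0) -> (k <= N)%N ->
  refl (gamma alpha N i k) *m tailprod alpha N i k.+1 = tailprod alpha N i k.
Proof.
move=> alpha_neq0 kN; have orth := wordprod_orthogonal alpha_neq0.
by rewrite /gamma refl_conj ?orth // -mulmxA orth mulmx1 -tailprodE.
Qed.

Lemma tailprod1_w0 Phi : root_system Phi -> is_base Phi alpha ->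
  longest_reduced_word alpha N i -> tailprod alpha N i 1 = w0_of alpha N i.
Proof.
move=> RS BS longest; have w0w0 := w0_invol RS BS longest.
have [w0_unit _] := mulmx1_unit w0w0.
rewrite /tailprod subn1 succnK map_rev -(invmx_wordprod (simple_root_neq0 RS BS)).
by rewrite -/(w0_of _ _ _) -[LHS]mulmx1 -w0w0 mulmxA mulVmx ?mul1mx.
Qed.

End TailProducts.

Lemma nat_down_ind (P : nat -> Prop) m :
  P m -> (forall k, (0 < k < m)%N -> P k.+1 -> P k) ->
  forall k, (0 < k <= m)%N -> P k.
Proof.
move=> Pm step k /andP[k0 km]; move: Pm step; rewrite -(subnK km).
move: (m - k)%N => d {km}; elim: d k k0 => [|d IH] k k0 Pm step //.
apply: (step); first by lia.
by apply: IH => // [|j j_lt]; [rewrite -addSnnS | apply: step; lia].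
Qed.

Section Procedure.
Variables (R : realFieldType) (n r : nat).
Variables (Phi : seq 'cV[R]_n) (alpha : 'I_r -> 'cV[R]_n).
Hypotheses (RS : root_system Phi) (BS : is_base Phi alpha).
Variables (N : nat) (i : nat -> 'I_r) (c : nat -> ycls).
Variables (pi sigma : nat -> 'M[R]_n).

Lemma typeA_or_typeB k : invmx (pi k.+1) *m gamma alpha N i k \in Phi ->
  typeA Phi alpha N i c pi k \/ typeB Phi alpha N i c pi k.
Proof.
rewrite /typeA /typeB; case: (c k) => [|/(root_pos_or_neg RS BS) []|]; tauto.
Qed.

Lemma step_invariant k : (k <= N)%N -> step_rel Phi alpha N i c pi sigma k ->
  pi k.+1 = tailprod alpha N i k.+1 *m sigma k.+1 -> inW alpha (sigma k.+1) ->
  pi k = tailprod alpha N i k *m sigma k /\ inW alpha (sigma k).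
Proof.
move=> kN [stepA stepB] pi_eq sigmaW.
have alpha_neq0 := simple_root_neq0 RS BS.
have piW : inW alpha (pi k.+1).
  by rewrite pi_eq; exact: inW_mul (inW_tailprod _ _ _ _) sigmaW.
have : invmx (pi k.+1) *m gamma alpha N i k \in Phi.
  rewrite /gamma mulmxA; apply: (inW_root_in RS BS); last exact: simple_root_in.
  exact: inW_mul (inW_invmx alpha_neq0 piW) (inW_tailprod _ _ _ _).
case/typeA_or_typeB => [/stepA [-> ->] | /stepB [-> ->]]; split=> //.
- by rewrite pi_eq mulmxA refl_gamma_tailprod.
- rewrite pi_eq [tailprod _ _ _ k]tailprodE // -mulmxA (mulmxA (refl _)).
  by rewrite refl_invol // mul1mx.
- exact: inW_mul (inW_refl_simple _ _) sigmaW.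
Qed.

End Procedure.

Theorem mainTheorem3 (R : realFieldType) (n r : nat)
  (Phi : seq 'cV[R]_n) (alpha : 'I_r -> 'cV[R]_n)
  (N : nat) (i : nat -> 'I_r) (w' : 'M[R]_n)
  (c : nat -> ycls) (pi sigma : nat -> 'M[R]_n) :
  root_system Phi -> irreducible_rs Phi -> is_base Phi alpha ->
  longest_reduced_word alpha N i ->
  inW alpha w' ->
  pi N.+1 = w' -> sigma N.+1 = w' ->
  (forall k, (1 <= k <= N)%N -> step_rel Phi alpha N i c pi sigma k) ->
  (forall k, (1 <= k <= N.+1)%N -> pi k = tailprod alpha N i k *m sigma k) /\
  pi 1%N = w0_of alpha N i *m sigma 1%N.
Proof.
move=> RS _ BS longest w'W piN sigmaN steps.
have invariant : forall k, (0 < k <= N.+1)%N ->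
    pi k = tailprod alpha N i k *m sigma k /\ inW alpha (sigma k).
  apply: nat_down_ind => [|k /andP[k0 kN] [pi_eq sigmaW]].
    by rewrite tailprodSN mul1mx piN sigmaN.
  have step_k : step_rel Phi alpha N i c pi sigma k by apply: steps; rewrite k0.
  exact: (step_invariant RS BS (kN : (k <= N)%N) step_k pi_eq sigmaW).
split=> [k /invariant [] //|].
by have [-> _] := invariant 1%N isT; rewrite (tailprod1_w0 RS BS longest).
Qed.
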